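(* For positive integers $b,n$ and a nonnegative integer $c$, $$M_n(1,b,c)=M_{n-1}(c+1,b,c).$$
   Context: $$M_n(a,b,c):=\operatorname{CT}_x\prod_{i=1}^n(1-x_i)^{-b}x_i^{-a+1}\prod_{1\le i<j\le n}(x_j-x_i)^{-c},$$ where $\operatorname{CT}_x=\operatorname{CT}_{x_n}\cdots\operatorname{CT}_{x_1}$ is iterated constant-term extraction, $(1-x_i)^{-b}$ is expanded as a power series in $x_i$, and for $i<j$, $(x_j-x_i)^{-c}=x_j^{-c}(1-x_i/x_j)^{-c}$ is expanded as a power series in $x_i/x_j$. For $n=0$ the empty product gives $M_0=1$. *)

From mathcomp Require Import all_boot all_order all_algebra.
From mathcomp Require Import classical_sets fsbigop.

Set Implicit Arguments.
Unset Strict Implicit.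
Unset Printing Implicit Defensive.
Import GRing.Theory.

(* M_n(a,b,c) = CT of  prod_i (1-x_i)^{-b} x_i^{1-a} prod_{i<j} (x_j-x_i)^{-c},
   with (1-x_i)^{-b} = sum_{m>=0} C(b+m-1,m) x_i^m  and
   (x_j-x_i)^{-c} = sum_{k>=0} C(c+k-1,k) x_i^k x_j^{-c-k}.
   Choosing one term from every factor is an exponent datum
   e = (m, k) with m : 'I_n -> nat and k : 'I_n * 'I_n -> nat (only the
   entries k (i,j) with i < j are used, the others are required to be 0).
   The iterated constant term is the (finite) sum over all such data whose
   total exponent in every variable x_i is 0 of the product of the
   chosen coefficients. *)

Definition exps (n : nat) := ({ffun 'I_n -> nat} * {ffun 'I_n * 'I_n -> nat})%type.

Definition exponent_of (n : nat) (a : int) (c : nat) (e : exps n) (i : 'I_n) : int :=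
  ((e.1 i)%:Z + (1 - a)
   + (\sum_(j : 'I_n | (i < j)%N) (e.2 (i, j))%:Z)
   - (\sum_(j : 'I_n | (j < i)%N) ((c + e.2 (j, i))%N)%:Z))%R.

Definition balanced (n : nat) (a : int) (c : nat) (e : exps n) : bool :=
  [forall i : 'I_n, forall j : 'I_n, (j <= i)%N ==> (e.2 (i, j) == 0%N)] &&
  [forall i : 'I_n, exponent_of a c e i == 0%R].

Definition weight (n b c : nat) (e : exps n) : nat :=
  ((\prod_(i : 'I_n) 'C((b + e.1 i).-1, e.1 i))
   * (\prod_(p : 'I_n * 'I_n | (p.1 < p.2)%N) 'C((c + e.2 p).-1, e.2 p)))%N.

Definition M (n : nat) (a : int) (b c : nat) : nat :=
  \big[addn/0%N]_(e \in [set e : exps n | balanced a c e]%classic) weight b c e.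

From mathcomp Require Import all_boot all_order all_algebra.
From mathcomp Require Import classical_sets fsbigop.
From mathcomp Require Import ring.

(* With a = 1 the variable x_1 carries the exponent m_1 + sum_j k_(1,j) and
   nothing is subtracted from it, so a balanced term has m_1 = 0 and
   k_(1,j) = 0: every factor (x_j - x_1)^{-c} contributes its leading term
   x_j^{-c}, with coefficient 1.  Deleting x_1 is then a weight-preserving
   bijection onto the balanced terms of M_{n-1}(1 + c, b, c). *)

Set Implicit Arguments.
Unset Strict Implicit.
Unset Printing Implicit Defensive.
Import GRing.Theory.

Section BigOrdLift.
Variables (R : Type) (idx : R) (op : Monoid.law idx) (n : nat).

Lemma big_ord_lift_gtn (F : 'I_n.+1 -> R) (i : 'I_n) :
  \big[op/idx]_(j : 'I_n.+1 | (lift ord0 i < j)%N) F j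
  = \big[op/idx]_(j : 'I_n | (i < j)%N) F (lift ord0 j).
Proof.
rewrite big_mkcond big_ord_recl /= Monoid.mul1m [RHS]big_mkcond.
by apply: eq_bigr => j _; rewrite /bump /= !add1n ltnS.
Qed.

Lemma big_ord_lift_ltn (F : 'I_n.+1 -> R) (i : 'I_n) :
  \big[op/idx]_(j : 'I_n.+1 | (j < lift ord0 i)%N) F j
  = op (F ord0) (\big[op/idx]_(j : 'I_n | (j < i)%N) F (lift ord0 j)).
Proof.
rewrite big_mkcond big_ord_recl /= [in RHS]big_mkcond.
by congr (op _ _); apply: eq_bigr => j _; rewrite /bump /= !add1n ltnS.
Qed.

End BigOrdLift.

Lemma big_pairs_ltn (R : Type) (idx : R) (op : Monoid.com_law idx) m
    (G : 'I_m * 'I_m -> R) :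
  \big[op/idx]_(p : 'I_m * 'I_m | (p.1 < p.2)%N) G p
  = \big[op/idx]_(i : 'I_m) \big[op/idx]_(j : 'I_m | (i < j)%N) G (i, j).
Proof.
rewrite big_mkcond; transitivity
  (\big[op/idx]_(i : 'I_m) \big[op/idx]_(j : 'I_m) if (i < j)%N then G (i, j) else idx).
  by rewrite pair_bigA; apply: eq_bigr => -[i j].
by apply: eq_bigr => i _; rewrite [RHS]big_mkcond.
Qed.

Section LiftExps.
Variable n : nat.

Definition zero_ext (f : {ffun 'I_n -> nat}) : {ffun 'I_n.+1 -> nat} :=
  [ffun i => if unlift ord0 i is Some i' then f i' else 0%N].

Definition zero_ext2 (g : {ffun 'I_n * 'I_n -> nat}) :
    {ffun 'I_n.+1 * 'I_n.+1 -> nat} :=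
  [ffun p => if (unlift ord0 p.1, unlift ord0 p.2) is (Some i, Some j)
             then g (i, j) else 0%N].

Definition lift_exps (e : exps n) : exps n.+1 := (zero_ext e.1, zero_ext2 e.2).

Definition unlift_exps (e : exps n.+1) : exps n :=
  ([ffun i => e.1 (lift ord0 i)], [ffun p => e.2 (lift ord0 p.1, lift ord0 p.2)]).

Lemma zero_ext_ord0 f : zero_ext f ord0 = 0%N.
Proof. by rewrite ffunE unlift_none. Qed.

Lemma zero_ext_lift f i : zero_ext f (lift ord0 i) = f i.
Proof. by rewrite ffunE liftK. Qed.

Lemma zero_ext2_ord0l g j : zero_ext2 g (ord0, j) = 0%N.
Proof. by rewrite ffunE /= unlift_none. Qed.

Lemma zero_ext2_ord0r g i : zero_ext2 g (i, ord0) = 0%N.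
Proof. by rewrite ffunE /= unlift_none; case: unlift. Qed.

Lemma zero_ext2_lift g i j : zero_ext2 g (lift ord0 i, lift ord0 j) = g (i, j).
Proof. by rewrite ffunE /= !liftK. Qed.

Lemma lift_exps_inj : injective lift_exps.
Proof.
move=> [f1 g1] [f2 g2] [Ef Eg]; congr (_, _); apply/ffunP.
  by move=> i; rewrite -(zero_ext_lift f1) Ef zero_ext_lift.
by move=> [i j]; rewrite -(zero_ext2_lift g1) Eg zero_ext2_lift.
Qed.

Lemma unlift_exps_K (e : exps n.+1) :
    e.1 ord0 = 0%N -> (forall j, e.2 (ord0, j) = 0%N) ->
    (forall i, e.2 (i, ord0) = 0%N) ->
  lift_exps (unlift_exps e) = e.
Proof.
case: e => f g /= f0 g0l g0r; congr (_, _); apply/ffunP.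
  by move=> i; rewrite ffunE; case: (unliftP ord0 i) => [i' ->|->]; rewrite ?ffunE.
move=> [i j]; rewrite ffunE /=.
by case: (unliftP ord0 i) => [i' ->|->]; case: (unliftP ord0 j) => [j' ->|->];
  rewrite ?ffunE.
Qed.

Lemma exponent_of_lift_exps (a : int) c e i :
  exponent_of a c (lift_exps e) (lift ord0 i) = exponent_of (a + c%:Z) c e i.
Proof.
rewrite /exponent_of /= zero_ext_lift big_ord_lift_gtn big_ord_lift_ltn /=.
rewrite zero_ext2_ord0l addn0.
under eq_bigr do rewrite zero_ext2_lift.
under [in X in (_ - (_ + X))%R]eq_bigr do rewrite zero_ext2_lift.
ring.
Qed.

Lemma exponent_of_lift_exps_ord0 (a : int) c e :
  exponent_of a c (lift_exps e) ord0 = (1 - a)%R.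
Proof.
rewrite /exponent_of /= zero_ext_ord0 big1 ?big_pred0 // => [|j _].
  by rewrite add0r addr0 subr0.
by rewrite zero_ext2_ord0l.
Qed.

Lemma balanced_lift_exps c e :
  balanced 1 c (lift_exps e) = balanced (1 + c%:Z) c e.
Proof.
rewrite /balanced; congr (_ && _).
  apply/forallP/forallP => H i.
    apply/forallP => j; have := forallP (H (lift ord0 i)) (lift ord0 j).
    by rewrite /= zero_ext2_lift /bump /= !add1n ltnS.
  apply/forallP => j /=.
  case: (unliftP ord0 i) => [i' ->|->]; case: (unliftP ord0 j) => [j' ->|->];
    rewrite ?zero_ext2_ord0l ?zero_ext2_ord0r ?implybT //.
  by rewrite zero_ext2_lift /bump /= leq_add2l; apply: (forallP (H i')).
apply/forallP/forallP => H i.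
  by rewrite -exponent_of_lift_exps; apply: H.
case: (unliftP ord0 i) => [i' ->|->]; first by rewrite exponent_of_lift_exps.
by rewrite exponent_of_lift_exps_ord0 subrr.
Qed.

Lemma weight_lift_exps b c e : weight b c (lift_exps e) = weight b c e.
Proof.
rewrite /weight /= !big_pairs_ltn; congr (_ * _)%N.
  rewrite big_ord_recl zero_ext_ord0 bin0 mul1n.
  by apply: eq_bigr => i _; rewrite zero_ext_lift.
rewrite big_ord_recl big1 ?Monoid.mul1m => [|j _]; last by rewrite zero_ext2_ord0l bin0.
apply: eq_bigr => i _; rewrite big_ord_lift_gtn.
by apply: eq_bigr => j _; rewrite zero_ext2_lift.
Qed.

Lemma exponent_of_ord0 (a : int) c (e : exps n.+1) :
  exponent_of a c e ord0
  = ((e.1 ord0 + \sum_(j : 'I_n.+1 | (0 < j)%N) e.2 (ord0, j))%N%:Z + (1 - a))%R.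
Proof.
rewrite /exponent_of [X in (_ - X)%R]big_pred0 // subr0.
rewrite PoszD -(big_morph Posz PoszD (erefl _)).
ring.
Qed.

Lemma balanced1_ord0_free c (e : exps n.+1) : balanced 1 c e ->
  [/\ e.1 ord0 = 0%N, forall j, e.2 (ord0, j) = 0%N
                    & forall i, e.2 (i, ord0) = 0%N].
Proof.
case/andP=> /forallP below_diag0 /forallP balanced_at.
have col0 i : e.2 (i, ord0) = 0%N.
  by apply/eqP; apply: (implyP (forallP (below_diag0 i) ord0)).
have := eqP (balanced_at ord0); rewrite exponent_of_ord0 subrr addr0.
case=> /eqP; rewrite addn_eq0 sum_nat_eq0 => /andP[/eqP m0 /forallP k0].
split=> // j; case: (posnP j) => [j0 | j_gt0]; last exact/eqP/(implyP (k0 j)).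
by rewrite (_ : j = ord0) //; apply: val_inj.
Qed.

End LiftExps.

Theorem corollary5p8 (b n c : nat) (hb : (0 < b)%N) (hn : (0 < n)%N) :
  M n 1%R b c = M n.-1 (c.+1)%:Z b c.
Proof.
(* The bijection below preserves weights for every [b]. *)
case: n hn => // n _ /=.
have -> : Posz c.+1 = (1 + c%:Z)%R by rewrite -PoszD add1n.
rewrite /M (reindex_fsbig (@lift_exps n) [set e | balanced (1 + c%:Z) c e]).
  by apply: eq_fsbigr => e _; rewrite weight_lift_exps.
split=> [e /= | e1 e2 _ _ /lift_exps_inj // | e /= bal_e].
  by rewrite balanced_lift_exps.
have [m0 k0l k0r] := balanced1_ord0_free bal_e.
exists (unlift_exps e); last exact: unlift_exps_K.
by rewrite /= -balanced_lift_exps unlift_exps_K.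
Qed.
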